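(* Let $S$ be a dense subsemigroup of $((0,\infty),+)$, let $(X,\langle T_s\rangle_{s\in S})$ be a dynamical system and let $x,y\in X$. There is an idempotent $u\in K(O^{+}(S))$ such that $T_u(x)=y$ if and only if $y$ is uniformly recurrent near zero and $x$ and $y$ are proximal near zero.
   Context: ''Dense'' means dense in the usual topology of $(0,\infty)$. $\beta S$ is the Stone–Čech compactification of the discrete set $S$ (ultrafilters on $S$), with $+$ extended so that $(\beta S,+)$ is a compact right topological semigroup: $A\in p+q$ iff $\{x\in S:-x+A\in q\}\in p$, where $-x+A=\{y\in S:x+y\in A\}$. $O^{+}(S)=\{p\in\beta S: S\cap(0,\epsilon)\in p\text{ for every }\epsilon>0\}$, a compact right topological subsemigroup of $\beta S$; $K(O^{+}(S))$ denotes its smallest two-sided ideal. A dynamical system $(X,\langle T_s\rangle_{s\in S})$ consists of a compact Hausdorff space $X$ and continuous maps $T_s:X\to X$ with $T_s\circ T_t=T_{s+t}$. For $p\in\beta S$, $T_p(x)=p\text{-}\lim_{s\in S}T_s(x)$; $T_p\circ T_q=T_{p+q}$. A subset $B\subseteq S$ is syndetic near zero iff for every $\epsilon>0$ there exist a finite nonempty $F\subseteq (0,\epsilon)\cap S$ and $\delta>0$ with $S\cap(0,\delta)\subseteq\bigcup_{t\in F}(-t+B)$. A point $y$ is uniformly recurrent near zero iff for each neighbourhood $W$ of $y$, $\{s\in S:T_s(y)\in W\}$ is syndetic near zero. Points $x,y$ are proximal near zero iff for every neighbourhood $U$ of the diagonal in $X\times X$ and every $\epsilon>0$ there is $s\in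 S\cap(0,\epsilon)$ with $(T_s(x),T_s(y))\in U$. *)

From Stdlib Require Import Reals List.
Open Scope R_scope.

Record Subsemigroup := {
  carrier : R -> Prop;
  carrier_pos : forall x, carrier x -> 0 < x;
  carrier_add : forall x y, carrier x -> carrier y -> carrier (x + y)
}.

Definition dense_in_pos (S : Subsemigroup) : Prop :=
  forall a b, 0 < a -> a < b -> exists s, carrier S s /\ a < s /\ s < b.

Definition pt (S : Subsemigroup) : Type := { x : R | carrier S x }.
Definition val {S : Subsemigroup} (s : pt S) : R := proj1_sig s.

Definition ptadd {S : Subsemigroup} (a b : pt S) : pt S :=
  exist _ (val a + val b) (carrier_add S _ _ (proj2_sig a) (proj2_sig b)).

(** * The Stone-Cech compactification beta S: ultrafilters on S *)
Definition filt (S : Subsemigroup) : Type := (pt S -> Prop) -> Prop.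

Definition is_ultrafilter {S : Subsemigroup} (p : filt S) : Prop :=
  p (fun _ => True) /\
  ~ p (fun _ => False) /\
  (forall A B : pt S -> Prop, p A -> (forall s, A s -> B s) -> p B) /\
  (forall A B : pt S -> Prop, p A -> p B -> p (fun s => A s /\ B s)) /\
  (forall A : pt S -> Prop, p A \/ p (fun s => ~ A s)).

Definition shift {S : Subsemigroup} (x : pt S) (A : pt S -> Prop) : pt S -> Prop :=
  fun y => A (ptadd x y).

Definition ufadd {S : Subsemigroup} (p q : filt S) : filt S :=
  fun A => p (fun x => q (shift x A)).

Definition Oplus {S : Subsemigroup} (p : filt S) : Prop :=
  is_ultrafilter p /\ forall eps, 0 < eps -> p (fun s => val s < eps).

Definition is_ideal_Oplus {S : Subsemigroup} (I : filt S -> Prop) : Prop :=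
  (exists p, I p) /\
  (forall p, I p -> Oplus p) /\
  (forall p q, Oplus p -> I q -> I (ufadd p q) /\ I (ufadd q p)).

(** K(O^+(S)), the smallest two-sided ideal of O^+(S), realised as the
    intersection of all two-sided ideals (which is the smallest ideal). *)
Definition in_K_Oplus {S : Subsemigroup} (p : filt S) : Prop :=
  Oplus p /\ forall I, is_ideal_Oplus I -> I p.

Definition idempotent {S : Subsemigroup} (u : filt S) : Prop := ufadd u u = u.

Record topology (X : Type) := {
  open : (X -> Prop) -> Prop;
  open_full : open (fun _ => True);
  open_inter : forall A B, open A -> open B -> open (fun x => A x /\ B x);
  open_union : forall F : (X -> Prop) -> Prop,
      (forall A, F A -> open A) -> open (fun x => exists A, F A /\ A x)
}.
Arguments open {X} t _.

Definition compact {X : Type} (t : topology X) : Prop :=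
  forall F : (X -> Prop) -> Prop,
    (forall A, F A -> open t A) ->
    (forall x, exists A, F A /\ A x) ->
    exists l : list (X -> Prop),
      (forall A, In A l -> F A) /\ (forall x, exists A, In A l /\ A x).

Definition hausdorff {X : Type} (t : topology X) : Prop :=
  forall x y : X, x <> y ->
    exists U V, open t U /\ open t V /\ U x /\ V y /\
                (forall z, U z -> V z -> False).

Definition continuous {X : Type} (t : topology X) (f : X -> X) : Prop :=
  forall A, open t A -> open t (fun x => A (f x)).

Definition prod_open {X : Type} (t : topology X) (U : X * X -> Prop) : Prop :=
  forall z, U z -> exists A B, open t A /\ open t B /\ A (fst z) /\ B (snd z) /\
              (forall a b, A a -> B b -> U (a, b)).

Definition dynsys {S : Subsemigroup} {X : Type} (t : topology X)
  (T : pt S -> X -> X) : Prop :=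
  compact t /\ hausdorff t /\
  (forall s, continuous t (T s)) /\
  (forall s u z, T s (T u z) = T (ptadd s u) z).

Definition plim {S : Subsemigroup} {X : Type} (t : topology X)
  (p : filt S) (f : pt S -> X) (z : X) : Prop :=
  forall W, open t W -> W z -> p (fun s => W (f s)).

Definition Tp_is {S : Subsemigroup} {X : Type} (t : topology X)
  (T : pt S -> X -> X) (p : filt S) (x y : X) : Prop :=
  plim t p (fun s => T s x) y.

Definition syndetic_near_zero {S : Subsemigroup} (B : pt S -> Prop) : Prop :=
  forall eps, 0 < eps ->
    exists (F : list (pt S)) (delta : R),
      F <> nil /\ (forall u, In u F -> val u < eps) /\ 0 < delta /\
      (forall s : pt S, val s < delta -> exists u, In u F /\ shift u B s).

Definition unif_recurrent_near_zero {S : Subsemigroup} {X : Type}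
  (t : topology X) (T : pt S -> X -> X) (y : X) : Prop :=
  forall W, open t W -> W y -> syndetic_near_zero (fun s => W (T s y)).

Definition proximal_near_zero {S : Subsemigroup} {X : Type}
  (t : topology X) (T : pt S -> X -> X) (x y : X) : Prop :=
  forall U : X * X -> Prop, prod_open t U -> (forall z, U (z, z)) ->
    forall eps, 0 < eps ->
      exists s : pt S, val s < eps /\ U (T s x, T s y).

(* If u is a minimal idempotent of O^+(S) with T_u x = y, then
   T_u y = T_(u+u) x = y, so x and y have the common limit y along u, which
   gives proximality near zero; and since u lies in a minimal left ideal,
   u = r + q + u for every q in O^+(S), which forces the return times of y to
   any neighbourhood to be syndetic near zero.
   Conversely, proximality gives p in O^+(S) with T_p x = T_p y; pushing p
   into a minimal left ideal and coming back to y by uniform recurrence gives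
   q in a minimal left ideal with T_q x = y = T_q y.  Ellis' theorem in the
   compact subsemigroup {w in O^+(S) + q : T_w x = y = T_w y} then yields the
   idempotent.  Compactness of beta S is used through ultrafilters generated
   by directed families, and minimal closed sets come from Zorn's lemma. *)

From Stdlib Require Import Reals Lra List Classical FunctionalExtensionality PropExtensionality ProofIrrelevance.
From mathcomp Require filter classical_sets boolp.
Open Scope R_scope.

Section BetaS.
Variable S : Subsemigroup.

(** * Ultrafilters on S *)

Section UltrafilterFacts.
Variable p : filt S.
Hypothesis hp : is_ultrafilter p.

Lemma uf_full : p (fun _ => True).
Proof. apply hp. Qed.

Lemma uf_empty : ~ p (fun _ => False).
Proof. apply hp. Qed.

Lemma uf_mono (A B : pt S -> Prop) : p A -> (forall s, A s -> B s) -> p B.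
Proof. apply hp. Qed.

Lemma uf_and (A B : pt S -> Prop) : p A -> p B -> p (fun s => A s /\ B s).
Proof. apply hp. Qed.

Lemma uf_em (A : pt S -> Prop) : p A \/ p (fun s => ~ A s).
Proof. apply hp. Qed.

Lemma uf_inhabited (A : pt S -> Prop) : p A -> exists s, A s.
Proof.
  intros hA. apply NNPP; intros hn. apply uf_empty.
  apply (uf_mono _ _ hA). intros s hs; apply hn; eauto.
Qed.

Lemma uf_not_compl (A : pt S -> Prop) : p A -> ~ p (fun s => ~ A s).
Proof.
  intros hA hn. destruct (uf_inhabited _ (uf_and _ _ hA hn)) as [s [h1 h2]]; auto.
Qed.

Lemma uf_compl (A : pt S -> Prop) : ~ p A -> p (fun s => ~ A s).
Proof. intros hA. destruct (uf_em A); tauto. Qed.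

Lemma uf_exists_In {Y : Type} (l : list Y) (Q : Y -> pt S -> Prop) :
  p (fun s => exists a, In a l /\ Q a s) -> exists a, In a l /\ p (Q a).
Proof.
  induction l as [|a l IH]; intros hl.
  - exfalso. apply uf_empty. apply (uf_mono _ _ hl). intros s [a [[] _]].
  - destruct (uf_em (Q a)) as [h|h]; [exists a; split; [left|]; auto|].
    destruct IH as [b [hb hq]].
    + apply (uf_mono _ _ (uf_and _ _ hl h)).
      intros s [[b [[<-|hb] hq]] hn]; [tauto|eauto].
    + exists b; split; [right|]; auto.
Qed.

End UltrafilterFacts.

Lemma uf_sub_eq (p q : filt S) :
  is_ultrafilter p -> is_ultrafilter q -> (forall A, p A -> q A) -> p = q.
Proof.
  intros hp hq hpq. extensionality A. apply propositional_extensionality. split; auto.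
  intros hA. apply NNPP; intros hn.
  exact (uf_not_compl q hq A hA (hpq _ (uf_compl p hp A hn))).
Qed.

Definition directed (B : (pt S -> Prop) -> Prop) :=
  forall A1 A2, B A1 -> B A2 -> exists A3, B A3 /\ forall s, A3 s -> A1 s /\ A2 s.

(* A directed family of nonempty sets generates a proper filter, which the
   ultrafilter lemma extends. *)
Lemma ultrafilter_of_base (B : (pt S -> Prop) -> Prop) :
  (exists A, B A) -> directed B -> (forall A, B A -> exists s, A s) ->
  exists p, is_ultrafilter p /\ forall A, B A -> p A.
Proof.
  intros [A0 hA0] hdir hne.
  set (G := fun E : pt S -> Prop => exists A, B A /\ forall s, A s -> E s).
  assert (hG : filter.ProperFilter G).
  { constructor; [|constructor].
    - intros [A [hA hAE]]. destruct (hne A hA) as [s hs]. exact (hAE s hs).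
    - exists A0; split; [exact hA0|intros; constructor].
    - hnf; intros E1 E2 [A1 [h1 k1]] [A2 [h2 k2]].
      destruct (hdir A1 A2 h1 h2) as [A3 [h3 k3]].
      exists A3; split; auto. intros s hs; destruct (k3 s hs); split; auto.
    - intros E1 E2 hE [A [hA hAE]]. exists A; split; auto. }
  destruct (filter.ultraFilterLemma hG) as [p [hUp hGp]].
  pose proof (filter.in_ultra_setVsetC (F := p)) as hVC.
  exists p; split.
  - destruct hUp as [[hp0 [hpT hpI hpS]] hmax].
    split; [exact hpT|]. split; [exact hp0|].
    split; [intros A A' hA hAA'; exact (hpS A A' hAA' hA)|].
    split; [intros A A'; exact (hpI A A')|].
    intros A. apply hVC. constructor; [constructor; auto; constructor; auto|exact hmax].
  - intros A hA. apply hGp. exists A; auto.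
Qed.

Lemma Oplus_of_base (B : (pt S -> Prop) -> Prop) :
  (exists A, B A) -> directed B ->
  (forall A eps, B A -> 0 < eps -> exists s, val s < eps /\ A s) ->
  exists p, Oplus p /\ forall A, B A -> p A.
Proof.
  intros [A0 hA0] hdir hmeet.
  destruct (ultrafilter_of_base
              (fun A => exists A' eps, B A' /\ 0 < eps /\ A = fun s => A' s /\ val s < eps))
    as [p [hp hBp]].
  - exists (fun s => A0 s /\ val s < 1), A0, 1. repeat split; auto; lra.
  - intros ? ? [A1 [e1 [h1 [he1 ->]]]] [A2 [e2 [h2 [he2 ->]]]].
    destruct (hdir A1 A2 h1 h2) as [A3 [h3 k3]].
    exists (fun s => A3 s /\ val s < Rmin e1 e2).
    split; [exists A3, (Rmin e1 e2); repeat split; auto; apply Rmin_glb_lt; auto|].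
    intros s [hs hv]. destruct (k3 s hs).
    pose proof (Rmin_l e1 e2); pose proof (Rmin_r e1 e2). repeat split; auto; lra.
  - intros ? [A [eps [hA [he ->]]]]. destruct (hmeet A eps hA he) as [s [h1 h2]].
    exists s; auto.
  - exists p. split; [split; [exact hp|]|].
    + intros eps he. apply (uf_mono p hp (fun s => A0 s /\ val s < eps)).
      * apply hBp. exists A0, eps; auto.
      * intros s [_ h]; exact h.
    + intros A hA. apply (uf_mono p hp (fun s => A s /\ val s < 1)).
      * apply hBp. exists A, 1. repeat split; auto; lra.
      * intros s [h _]; exact h.
Qed.

Lemma Oplus_nonempty : dense_in_pos S -> exists p : filt S, Oplus p.
Proof.
  intros HS. destruct (Oplus_of_base (fun A => A = fun _ => True)) as [p [hp _]].
  - exists (fun _ => True); reflexivity.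
  - intros ? ? -> ->. exists (fun _ => True); split; auto.
  - intros ? eps -> he. destruct (HS (eps / 2) eps ltac:(lra) ltac:(lra)) as [s [hs [_ h]]].
    exists (exist _ s hs); auto.
  - exists p; exact hp.
Qed.

(** * The semigroup O^+(S) *)

Lemma pt_eq (a b : pt S) : val a = val b -> a = b.
Proof.
  destruct a as [a ha], b as [b hb]; simpl; intros ->. f_equal; apply proof_irrelevance.
Qed.

Lemma ptaddA (a b c : pt S) : ptadd a (ptadd b c) = ptadd (ptadd a b) c.
Proof. apply pt_eq; unfold ptadd, val; simpl; ring. Qed.

Lemma shift_shift (a b : pt S) (A : pt S -> Prop) :
  shift b (shift a A) = shift (ptadd a b) A.
Proof. extensionality s; unfold shift; rewrite ptaddA; reflexivity. Qed.

Lemma ufaddA (p q r : filt S) : ufadd p (ufadd q r) = ufadd (ufadd p q) r.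
Proof.
  extensionality A. unfold ufadd. f_equal. extensionality a. f_equal.
  extensionality b. change (r (shift b (shift a A)) = r (shift (ptadd a b) A)).
  rewrite shift_shift. reflexivity.
Qed.

Lemma ufadd_ultrafilter (p q : filt S) :
  is_ultrafilter p -> is_ultrafilter q -> is_ultrafilter (ufadd p q).
Proof.
  intros hp hq. unfold ufadd. split; [|split; [|split; [|split]]].
  - apply (uf_mono p hp _ _ (uf_full p hp)). intros; apply (uf_full q hq).
  - intros h. destruct (uf_inhabited p hp _ h) as [s hs]. exact (uf_empty q hq hs).
  - intros A B hA hAB. apply (uf_mono p hp _ _ hA). intros s hs.
    apply (uf_mono q hq _ _ hs). intros v; unfold shift; auto.
  - intros A B hA hB. apply (uf_mono p hp _ _ (uf_and p hp _ _ hA hB)).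
    intros s [h1 h2]. exact (uf_and q hq _ _ h1 h2).
  - intros A. destruct (uf_em p hp (fun x => q (shift x A))) as [h|h]; [left; auto|right].
    apply (uf_mono p hp _ _ h). intros s hs. apply (uf_compl q hq _ hs).
Qed.

Lemma Oplus_ultrafilter (p : filt S) : Oplus p -> is_ultrafilter p.
Proof. intros [h _]; exact h. Qed.

Lemma Oplus_add (p q : filt S) : Oplus p -> Oplus q -> Oplus (ufadd p q).
Proof.
  intros [hp ep] [hq eq]. split; [apply ufadd_ultrafilter; auto|].
  intros eps he. unfold ufadd. apply (uf_mono p hp _ _ (ep (eps / 2) ltac:(lra))).
  intros s hs. apply (uf_mono q hq _ _ (eq (eps / 2) ltac:(lra))). intros v hv.
  unfold shift, ptadd, val in *; simpl. lra.
Qed.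


(** * Closed subsets of beta S *)

Definition cluster (C : filt S -> Prop) (p : filt S) := forall A, p A -> exists c, C c /\ c A.

Definition closed (C : filt S -> Prop) :=
  forall p, is_ultrafilter p -> cluster C p -> C p.

Definition nonempty_closed (C : filt S -> Prop) :=
  (exists c, C c) /\ (forall c, C c -> is_ultrafilter c) /\ closed C.

Definition bigcap (F : (filt S -> Prop) -> Prop) (c : filt S) := forall C, F C -> C c.

Lemma closed_of_common_sets (C : filt S -> Prop) p :
  (forall c, C c -> is_ultrafilter c) -> closed C -> is_ultrafilter p ->
  (forall E, (forall c, C c -> c E) -> p E) -> C p.
Proof.
  intros hu hC hp hE. apply hC; auto. intros A hA. apply NNPP; intros hn.
  apply (uf_not_compl p hp A hA). apply hE. intros c hc.
  apply (uf_compl c (hu c hc)). intros h; apply hn; eauto.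
Qed.

Lemma closedI (C1 C2 : filt S -> Prop) :
  closed C1 -> closed C2 -> closed (fun c => C1 c /\ C2 c).
Proof.
  intros h1 h2 p hp hcl. split; [apply h1|apply h2]; auto;
    intros A hA; destruct (hcl A hA) as [c [[k1 k2] k3]]; eauto.
Qed.

Lemma Oplus_closed : closed Oplus.
Proof.
  intros p hp hcl. split; auto. intros eps he. apply NNPP; intros hn.
  destruct (hcl _ (uf_compl p hp _ hn)) as [c [[hc ec] h]].
  exact (uf_not_compl c hc _ (ec eps he) h).
Qed.

Lemma closed_right_fiber (w q : filt S) :
  closed (fun a => is_ultrafilter a /\ ufadd a w = q).
Proof.
  intros p hp hcl. split; auto. extensionality D. apply propositional_extensionality. split.
  - intros h. destruct (hcl _ h) as [c [[hc e] hcD]]. rewrite <- e. exact hcD.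
  - intros h. apply NNPP; intros hn.
    destruct (hcl _ (uf_compl p hp _ hn)) as [c [[hc e] hcD]].
    rewrite <- e in h. exact (uf_not_compl c hc _ h hcD).
Qed.

(* The image of a compact set under the continuous map [a |-> a + z]. *)
Lemma closed_add_right (C : filt S -> Prop) (z : filt S) :
  (forall c, C c -> is_ultrafilter c) -> closed C -> is_ultrafilter z ->
  closed (fun p => exists a, C a /\ p = ufadd a z).
Proof.
  intros hu hC hz p hp hcl.
  destruct (ultrafilter_of_base (fun E => exists A D, p A /\ (forall c, C c -> c D) /\
              E = fun s => z (shift s A) /\ D s)) as [a [ha haB]].
  - exists (fun s => z (shift s (fun _ => True)) /\ True), (fun _ => True), (fun _ => True).
    split; [apply (uf_full p hp)|]. split; auto. intros c hc; apply (uf_full c (hu c hc)).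
  - intros ? ? [A1 [D1 [h1 [k1 ->]]]] [A2 [D2 [h2 [k2 ->]]]].
    exists (fun s => z (shift s (fun v => A1 v /\ A2 v)) /\ (D1 s /\ D2 s)). split.
    + exists (fun v => A1 v /\ A2 v), (fun s => D1 s /\ D2 s).
      split; [apply (uf_and p hp); auto|]. split; auto.
      intros c hc. apply (uf_and c (hu c hc)); [apply k1|apply k2]; exact hc.
    + intros s [hs [d1 d2]]. unfold shift in hs.
      split; split; auto; apply (uf_mono z hz _ _ hs); intros v []; auto.
  - intros ? [A [D [hA [hD ->]]]]. destruct (hcl A hA) as [c [[a' [ha' ->]] hcA]].
    exact (uf_inhabited a' (hu a' ha') _ (uf_and a' (hu a' ha') _ _ hcA (hD a' ha'))).
  - exists a. split.
    + apply closed_of_common_sets; auto. intros E hE.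
      apply (uf_mono a ha (fun s => z (shift s (fun _ => True)) /\ E s)); [|intros s []; auto].
      apply haB. exists (fun _ => True), E. split; [apply (uf_full p hp)|]. split; auto.
    + apply uf_sub_eq; auto; [apply ufadd_ultrafilter; auto|]. intros A hA.
      apply (uf_mono a ha (fun s => z (shift s A) /\ True)); [|intros s []; auto].
      apply haB. exists A, (fun _ => True). split; auto. split; auto.
      intros c hc; apply (uf_full c (hu c hc)).
Qed.

Lemma nonempty_closed_add_right (C : filt S -> Prop) (z : filt S) :
  nonempty_closed C -> is_ultrafilter z ->
  nonempty_closed (fun p => exists a, C a /\ p = ufadd a z).
Proof.
  intros [[c hc] [hu hC]] hz. split; [|split].
  - exists (ufadd c z); eauto.
  - intros p [a [ha ->]]. apply ufadd_ultrafilter; auto.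
  - apply closed_add_right; auto.
Qed.

Definition chain (F : (filt S -> Prop) -> Prop) :=
  forall C1 C2, F C1 -> F C2 -> (forall c, C1 c -> C2 c) \/ (forall c, C2 c -> C1 c).

(* Compactness of beta S: a chain of nonempty closed sets has the finite
   intersection property, so its intersection is nonempty. *)
Lemma chain_bigcap_nonempty_closed (F : (filt S -> Prop) -> Prop) :
  (exists C, F C) -> (forall C, F C -> nonempty_closed C) -> chain F ->
  nonempty_closed (bigcap F).
Proof.
  intros [C0 hC0] hF hch.
  assert (hu : forall C c, F C -> C c -> is_ultrafilter c)
    by (intros C c hC; apply (hF C hC)).
  split; [|split].
  - destruct (ultrafilter_of_base (fun A => exists C, F C /\ forall c, C c -> c A))
      as [p [hp hBp]].
    + exists (fun _ => True), C0. split; auto. intros c hc; exact (uf_full c (hu _ _ hC0 hc)).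
    + intros A1 A2 [C1 [h1 k1]] [C2 [h2 k2]]. exists (fun s => A1 s /\ A2 s). split; auto.
      destruct (hch C1 C2 h1 h2) as [sub|sub]; [exists C1|exists C2]; split; auto;
        intros c hc.
      * apply (uf_and c (hu _ _ h1 hc)); [apply k1|apply k2; apply sub]; exact hc.
      * apply (uf_and c (hu _ _ h2 hc)); [apply k1; apply sub|apply k2]; exact hc.
    + intros A [C [hC hCA]]. destruct (hF C hC) as [[c hc] _].
      exact (uf_inhabited c (hu _ _ hC hc) _ (hCA c hc)).
    + exists p. intros C hC. destruct (hF C hC) as [_ [hCu hCc]].
      apply closed_of_common_sets; auto. intros E hE. apply hBp. exists C; auto.
  - intros c hc. exact (hu _ _ hC0 (hc C0 hC0)).
  - intros p hp hcl C hC. destruct (hF C hC) as [_ [_ hCc]]. apply hCc; auto.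
    intros A hA. destruct (hcl A hA) as [c [h1 h2]]. exists c; split; [apply h1|]; auto.
Qed.

Definition bigcap_stable (Pr : (filt S -> Prop) -> Prop) :=
  forall F, (exists C, F C) -> (forall C, F C -> Pr C) -> Pr (bigcap F).

(* Zorn's lemma, applied to the nonempty closed [Pr]-subsets of [C0] ordered
   by reverse inclusion. *)
Lemma exists_minimal (Pr : (filt S -> Prop) -> Prop) (C0 : filt S -> Prop) :
  bigcap_stable Pr -> nonempty_closed C0 -> Pr C0 ->
  exists A, (nonempty_closed A /\ Pr A) /\ (forall c, A c -> C0 c) /\
    forall B, nonempty_closed B -> Pr B -> (forall c, B c -> A c) -> forall c, A c -> B c.
Proof.
  intros hPr hC0 hP0.
  pose (sub := {C : filt S -> Prop | (nonempty_closed C /\ Pr C) /\ forall c, C c -> C0 c}).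
  pose (R := fun a b : sub => boolp.asbool (forall c, proj1_sig b c -> proj1_sig a c)).
  destruct (@classical_sets.ZL_preorder sub
              (exist _ C0 (conj (conj hC0 hP0) (fun c h => h))) R) as [[A hA] hmax].
  - intros a. apply boolp.asboolT; auto.
  - intros a b c hab hbc. apply boolp.asboolT. intros x hx.
    exact (boolp.asboolW hab x (boolp.asboolW hbc x hx)).
  - intros Ch hCh.
    pose (F := fun C => C = C0 \/ exists a, Ch a /\ C = proj1_sig a).
    assert (hF : forall C, F C -> (nonempty_closed C /\ Pr C) /\ forall c, C c -> C0 c).
    { intros C [->|[[a ha] [_ ->]]]; auto. }
    assert (hsub : forall c, bigcap F c -> C0 c) by (intros c hc; apply hc; left; auto).
    assert (hFn : exists C, F C) by (exists C0; left; auto).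
    assert (hgood : nonempty_closed (bigcap F) /\ Pr (bigcap F)).
    { split.
      - apply chain_bigcap_nonempty_closed; auto; [intros C hC; apply hF; auto|].
        intros C1 C2 [->|[a1 [h1 ->]]] [->|[a2 [h2 ->]]].
        + left; auto.
        + right; apply (proj2_sig a2).
        + left; apply (proj2_sig a1).
        + destruct (hCh a1 a2 h1 h2) as [h|h]; [right|left]; apply (boolp.asboolW h).
      - apply hPr; auto. intros C hC; apply hF; auto. }
    exists (exist _ (bigcap F) (conj hgood hsub)). intros a ha.
    apply boolp.asboolT. intros c hc. apply hc. right; exists a; auto.
  - exists A. destruct hA as [hA hAC0]. split; [exact hA|]. split; [exact hAC0|].
    intros B hB hPB hBA.
    assert (hB0 : forall c, B c -> C0 c) by auto.
    apply (boolp.asboolW (hmax (exist _ B (conj (conj hB hPB) hB0)) (boolp.asboolT hBA))).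
Qed.

Definition add_closed (C : filt S -> Prop) := forall a b, C a -> C b -> C (ufadd a b).

(* Ellis: in a minimal closed subsemigroup [A] with [w] in it, both [A + w]
   and [{a in A | a + w = w}] are closed subsemigroups, so by minimality they
   equal [A]; hence [w + w = w]. *)
Lemma ellis_idempotent (M : filt S -> Prop) :
  nonempty_closed M -> add_closed M -> exists u, M u /\ idempotent u.
Proof.
  intros hM hMs.
  assert (hstab : bigcap_stable add_closed).
  { intros F _ h a b ha hb C hC. apply (h C hC); [exact (ha C hC)|exact (hb C hC)]. }
  destruct (exists_minimal add_closed M hstab hM hMs) as [A [[hA hAs] [hAM hmin]]].
  destruct hA as [[w hw] [hu hAc]].
  set (Aw := fun p => exists a, A a /\ p = ufadd a w).
  assert (hAw : nonempty_closed Aw).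
  { apply nonempty_closed_add_right; [split; [exists w|split]|]; auto. }
  assert (hAws : add_closed Aw).
  { intros p1 p2 [a [ha ->]] [b [hb ->]]. exists (ufadd (ufadd a w) b).
    split; [apply hAs; auto|]. rewrite ufaddA; reflexivity. }
  assert (hAwA : forall c, Aw c -> A c) by (intros c [a [ha ->]]; apply hAs; auto).
  destruct (hmin Aw hAw hAws hAwA w hw) as [a [ha ea]].
  set (Fix := fun a => A a /\ (is_ultrafilter a /\ ufadd a w = w)).
  assert (hFix : nonempty_closed Fix).
  { split; [exists a; split; auto|]. split; [intros c [h _]; auto|].
    apply closedI; auto. apply closed_right_fiber. }
  assert (hFixs : add_closed Fix).
  { intros b1 b2 [h1 [k1 e1]] [h2 [k2 e2]]. split; [apply hAs; auto|].
    split; [apply ufadd_ultrafilter; auto|]. rewrite <- ufaddA, e2; auto. }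
  destruct (hmin Fix hFix hFixs (fun c h => proj1 h) w hw) as [_ [_ e]].
  exists w; split; auto.
Qed.

(** * The smallest ideal of O^+(S) *)

Definition left_ideal (C : filt S -> Prop) := forall q c, Oplus q -> C c -> C (ufadd q c).

(* [v] lies in a minimal left ideal of O^+(S), namely O^+(S) + v, which is
   minimal iff [v] is recovered from every [q + v]. *)
Definition in_min_left_ideal (v : filt S) :=
  Oplus v /\ forall q, Oplus q -> exists r, Oplus r /\ ufadd r (ufadd q v) = v.

Lemma exists_in_min_left_ideal : dense_in_pos S -> exists v, in_min_left_ideal v.
Proof.
  intros HS.
  assert (hstab : bigcap_stable left_ideal).
  { intros F _ h q c hq hc C hC. apply (h C hC); [exact hq|exact (hc C hC)]. }
  assert (hO : nonempty_closed Oplus).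
  { split; [apply Oplus_nonempty; auto|]. split; [apply Oplus_ultrafilter|apply Oplus_closed]. }
  destruct (exists_minimal left_ideal Oplus hstab hO (fun q c hq => Oplus_add q c hq))
    as [A [[[[v hv] [hu hAc]] hAl] [hAO hmin]]].
  exists v. split; auto. intros q hq.
  set (Oqv := fun p => exists a, Oplus a /\ p = ufadd a (ufadd q v)).
  assert (hOqv : nonempty_closed Oqv).
  { apply nonempty_closed_add_right; [exact hO|apply hu, hAl; auto]. }
  assert (hOqvl : left_ideal Oqv).
  { intros b c hb [a [ha ->]]. exists (ufadd b a). split; [apply Oplus_add; auto|].
    apply ufaddA. }
  assert (hOqvA : forall c, Oqv c -> A c) by (intros c [a [ha ->]]; apply hAl; auto).
  destruct (hmin Oqv hOqv hOqvl hOqvA v hv) as [r [hr e]].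
  exists r; split; auto.
Qed.

Lemma in_min_left_ideal_addl (p v : filt S) :
  Oplus p -> in_min_left_ideal v -> in_min_left_ideal (ufadd p v).
Proof.
  intros hp [hv hm]. split; [apply Oplus_add; auto|]. intros q hq.
  destruct (hm (ufadd q p) (Oplus_add _ _ hq hp)) as [r [hr e]].
  exists (ufadd p r). split; [apply Oplus_add; auto|].
  rewrite <- (ufaddA p r), (ufaddA q p v), e. reflexivity.
Qed.

Lemma in_min_left_ideal_addr (p v : filt S) :
  Oplus p -> in_min_left_ideal v -> in_min_left_ideal (ufadd v p).
Proof.
  intros hp [hv hm]. split; [apply Oplus_add; auto|]. intros q hq.
  destruct (hm q hq) as [r [hr e]]. exists r; split; auto.
  rewrite ufaddA, ufaddA, <- (ufaddA r q v), e. reflexivity.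
Qed.

(* The union of the minimal left ideals is an ideal contained in every ideal. *)
Lemma in_K_Oplus_iff (u : filt S) :
  dense_in_pos S -> in_K_Oplus u <-> in_min_left_ideal u.
Proof.
  intros HS. split.
  - intros [_ hK]. apply hK. split; [apply exists_in_min_left_ideal; auto|].
    split; [intros p [h _]; auto|].
    intros p q hp hq. split; [apply in_min_left_ideal_addl|apply in_min_left_ideal_addr]; auto.
  - intros [hu hm]. split; auto. intros I [[w hw] [hIO hI]].
    destruct (hm w (hIO w hw)) as [r [hr e]]. rewrite <- e.
    apply (hI r); auto. apply (hI u w hu hw).
Qed.

(* If [B] is not syndetic near zero, the sets avoiding finitely many
   translates [-v + B] with [v] small meet every interval (0, delta). *)
Lemma not_syndetic_Oplus (B : pt S -> Prop) :
  dense_in_pos S -> ~ syndetic_near_zero B ->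
  exists eps q, 0 < eps /\ Oplus q /\ forall v, val v < eps -> q (fun s => ~ shift v B s).
Proof.
  intros HS hns.
  assert (exists eps, 0 < eps /\ forall F delta, F <> nil -> (forall u, In u F -> val u < eps) ->
            0 < delta -> exists s, val s < delta /\ forall u, In u F -> ~ shift u B s)
    as [eps [heps hgap]].
  { apply NNPP; intros hn. apply hns. intros eps heps. apply NNPP; intros hF.
    apply hn. exists eps. split; auto. intros F delta hne hFe hd. apply NNPP; intros hs.
    apply hF. exists F, delta. split; auto. split; auto. split; auto.
    intros s hsd. apply NNPP; intros hcov. apply hs. exists s; split; auto.
    intros u hu hsu. apply hcov; eauto. }
  destruct (Oplus_of_base (fun A => exists F, (forall u, In u F -> val u < eps) /\
              A = fun s => forall u, In u F -> ~ shift u B s)) as [q [hq hqB]].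
  - exists (fun s => forall u, In u nil -> ~ shift u B s), nil. split; auto. intros u [].
  - intros ? ? [F1 [h1 ->]] [F2 [h2 ->]].
    exists (fun s => forall u, In u (F1 ++ F2) -> ~ shift u B s). split.
    + exists (F1 ++ F2). split; auto. intros u hu. apply in_app_or in hu; destruct hu; auto.
    + intros s hs. split; intros u hu; apply hs, in_or_app; auto.
  - intros ? delta [F [hF ->]] hd. destruct F as [|v F].
    + destruct (HS (delta / 2) delta ltac:(lra) ltac:(lra)) as [s [hs [_ h]]].
      exists (exist _ s hs). split; [exact h|intros u []].
    + apply hgap; auto. discriminate.
  - exists eps, q. split; auto. split; auto. intros v hv.
    apply (uf_mono q (Oplus_ultrafilter q hq)
             (fun s => forall u, In u (v :: nil) -> ~ shift u B s)).
    + apply hqB. exists (v :: nil). split; auto. intros u [<-|[]]; auto.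
    + intros s hs. apply hs; left; auto.
Qed.

(** * Dynamics *)

Section Dynamics.
Variable X : Type.
Variable t : topology X.
Variable T : pt S -> X -> X.
Hypothesis HT : dynsys t T.

Lemma plim_exists (p : filt S) (f : pt S -> X) : is_ultrafilter p -> exists z, plim t p f z.
Proof.
  intros hp. apply NNPP; intros hn. destruct HT as [hc _].
  destruct (hc (fun A => open t A /\ ~ p (fun s => A (f s)))) as [l [hl hcov]].
  - intros A [h _]; auto.
  - intros z. apply NNPP; intros hz. apply hn. exists z. intros W hW hWz.
    apply NNPP; intros hp'. apply hz. exists W; auto.
  - destruct (uf_exists_In p hp l (fun A s => A (f s))) as [A [hA hpA]].
    + apply (uf_mono p hp _ _ (uf_full p hp)). intros s _.
      destruct (hcov (f s)) as [A [h1 h2]]; eauto.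
    + exact (proj2 (hl A hA) hpA).
Qed.

Lemma plim_unique (p : filt S) (f : pt S -> X) z1 z2 :
  is_ultrafilter p -> plim t p f z1 -> plim t p f z2 -> z1 = z2.
Proof.
  intros hp h1 h2. apply NNPP; intros hne. destruct HT as [_ [hH _]].
  destruct (hH z1 z2 hne) as [U [V [hU [hV [hUz [hVz hd]]]]]].
  destruct (uf_inhabited p hp _ (uf_and p hp _ _ (h1 U hU hUz) (h2 V hV hVz))) as [s [a b]].
  exact (hd _ a b).
Qed.

Lemma Tp_add (p q : filt S) x z w :
  is_ultrafilter p -> is_ultrafilter q -> Tp_is t T q x z -> Tp_is t T p z w ->
  Tp_is t T (ufadd p q) x w.
Proof.
  intros hp hq hqz hpw W hW hWw. destruct HT as [_ [_ [hcont hact]]].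
  apply (uf_mono p hp _ _ (hpw W hW hWw)). intros s hs.
  apply (uf_mono q hq _ _ (hqz _ (hcont s W hW) hs)). intros v hv.
  unfold shift. rewrite <- hact. exact hv.
Qed.

Lemma closed_Tp_fiber x y : closed (fun w => is_ultrafilter w /\ Tp_is t T w x y).
Proof.
  intros p hp hcl. split; auto. destruct HT as [_ [hH _]].
  destruct (plim_exists p (fun s => T s x) hp) as [w hw].
  replace y with w; auto. apply NNPP; intros hne.
  destruct (hH w y hne) as [U [V [hU [hV [hUw [hVy hd]]]]]].
  destruct (hcl _ (hw U hU hUw)) as [c [[hc hcy] hcU]].
  destruct (uf_inhabited c hc _ (uf_and c hc _ _ hcU (hcy V hV hVy))) as [s [k1 k2]].
  exact (hd _ k1 k2).
Qed.

Definition adherent (N : X -> Prop) (c : X) :=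
  forall A, open t A -> A c -> exists d, A d /\ N d.

Lemma not_adherent (N : X -> Prop) c :
  ~ adherent N c -> exists A, open t A /\ A c /\ forall d, A d -> N d -> False.
Proof.
  intros h. apply NNPP; intros hn. apply h. intros A hA hAc. apply NNPP; intros hn2.
  apply hn. exists A. split; auto. split; auto. intros d h1 h2; apply hn2; eauto.
Qed.

Lemma open_avoiding_list a (U : X -> Prop) (l : list (X -> Prop)) :
  (forall A, In A l -> A = U \/ exists P, open t P /\ P a /\ forall d, P d -> A d -> False) ->
  exists N, open t N /\ N a /\
    forall A, In A l -> A = U \/ forall d, N d -> A d -> False.
Proof.
  induction l as [|A l IH]; intros hl.
  - exists (fun _ => True). split; [apply open_full|]. split; [exact I|intros B []].
  - destruct IH as [N [hN [hNa hNl]]]; [intros B hB; apply hl; right; auto|].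
    destruct (hl A (or_introl eq_refl)) as [->|[P [hP [hPa hPd]]]].
    + exists N. split; auto. split; auto. intros B [<-|hB]; auto.
    + exists (fun z => N z /\ P z). split; [apply open_inter; auto|]. split; auto.
      intros B [<-|hB].
      * right. intros d [_ k] k2; exact (hPd d k k2).
      * destruct (hNl B hB) as [h|h]; auto. right. intros d [k _]; exact (h d k).
Qed.

(* Compact Hausdorff spaces are regular: cover [X] by [U] and by open sets
   separated from [a], and intersect the finitely many separating
   neighbourhoods of [a]. *)
Lemma regular a (U : X -> Prop) :
  open t U -> U a -> exists N, open t N /\ N a /\ forall c, adherent N c -> U c.
Proof.
  intros hU hUa. destruct HT as [hc [hH _]].
  set (F := fun A : X -> Prop => open t A /\ (A = U \/ exists P, open t P /\ P a /\
              forall d, P d -> A d -> False)).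
  destruct (hc F) as [l [hl hcov]].
  - intros A [h _]; auto.
  - intros z. destruct (classic (U z)) as [h|h]; [exists U; split; [split; auto|auto]|].
    assert (hne : a <> z) by (intros ->; auto).
    destruct (hH a z hne) as [P [Q [hP [hQ [hPa [hQz hPQ]]]]]].
    exists Q. split; auto. split; auto. right. exists P. split; auto.
  - destruct (open_avoiding_list a U l (fun A hA => proj2 (hl A hA))) as [N [hN [hNa hNl]]].
    exists N. split; auto. split; auto. intros c hcl.
    destruct (hcov c) as [A [hA hAc]]. destruct (hNl A hA) as [->|h]; auto.
    destruct (hcl A (proj1 (hl A hA)) hAc) as [d [k1 k2]]. destruct (h d k2 k1).
Qed.

Lemma prod_open_full : prod_open t (fun _ => True).
Proof.
  intros z _. exists (fun _ => True), (fun _ => True).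
  split; [apply open_full|]. split; [apply open_full|]. auto.
Qed.

Lemma prod_openI (U1 U2 : X * X -> Prop) :
  prod_open t U1 -> prod_open t U2 -> prod_open t (fun z => U1 z /\ U2 z).
Proof.
  intros hU1 hU2 z [k1 k2].
  destruct (hU1 z k1) as [A1 [B1 [a1 [b1 [c1 [d1 f1]]]]]].
  destruct (hU2 z k2) as [A2 [B2 [a2 [b2 [c2 [d2 f2]]]]]].
  exists (fun a => A1 a /\ A2 a), (fun b => B1 b /\ B2 b).
  split; [apply open_inter; auto|]. split; [apply open_inter; auto|].
  split; auto. split; auto. intros a b [m1 m2] [n1 n2]; auto.
Qed.

Lemma proximal_common_limit x y : proximal_near_zero t T x y ->
  exists p a, Oplus p /\ Tp_is t T p x a /\ Tp_is t T p y a.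
Proof.
  intros hprox. destruct HT as [_ [hH _]].
  destruct (Oplus_of_base (fun A => exists U, prod_open t U /\ (forall z, U (z, z)) /\
              A = fun s => U (T s x, T s y))) as [p [hp hpB]].
  - exists (fun _ => True), (fun _ => True). split; [apply prod_open_full|]. auto.
  - intros ? ? [U1 [hU1 [hd1 ->]]] [U2 [hU2 [hd2 ->]]].
    exists (fun s => U1 (T s x, T s y) /\ U2 (T s x, T s y)). split; auto.
    exists (fun z => U1 z /\ U2 z). split; [apply prod_openI; auto|]. split; auto.
  - intros ? eps [U [hU [hd ->]]] he. exact (hprox U hU hd eps he).
  - pose proof (Oplus_ultrafilter p hp) as hpu.
    destruct (plim_exists p (fun s => T s x) hpu) as [a ha].
    destruct (plim_exists p (fun s => T s y) hpu) as [b hb].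
    exists p, a. split; auto. split; auto. replace a with b; auto.
    apply NNPP; intros hne. apply not_eq_sym in hne.
    destruct (hH a b hne) as [Ua [Ub [hUa [hUb [hUaa [hUbb hd]]]]]].
    destruct (regular b Ub hUb hUbb) as [Nb [hNb [hNbb hNbcl]]].
    (* The complement of (closure Ua) x (closure Nb) is a neighbourhood of
       the diagonal, since closure Nb lies in Ub, which misses Ua. *)
    set (U := fun z : X * X => ~ adherent Ua (fst z) \/ ~ adherent Nb (snd z)).
    assert (hU : prod_open t U).
    { intros z [h|h]; destruct (not_adherent _ _ h) as [A [hA [hAz hAd]]].
      - exists A, (fun _ => True). split; auto. split; [apply open_full|]. split; auto.
        split; [exact I|]. intros a' b' ha' _. left. intros hcl.
        destruct (hcl A hA ha') as [d [k1 k2]]. exact (hAd d k1 k2).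
      - exists (fun _ => True), A. split; [apply open_full|]. split; auto. split; [exact I|].
        split; auto. intros a' b' _ hb'. right. intros hcl.
        destruct (hcl A hA hb') as [d [k1 k2]]. exact (hAd d k1 k2). }
    assert (hdiag : forall z, U (z, z)).
    { intros z. unfold U; simpl. apply NNPP; intros hz. apply not_or_and in hz.
      destruct hz as [h1 h2]. apply NNPP in h1. apply NNPP in h2.
      destruct (h1 Ub hUb (hNbcl z h2)) as [d [k1 k2]]. exact (hd d k2 k1). }
    assert (hpU : p (fun s => U (T s x, T s y))) by (apply hpB; exists U; auto).
    destruct (uf_inhabited p hpu _ (uf_and p hpu _ _ hpU
                (uf_and p hpu _ _ (ha Ua hUa hUaa) (hb Nb hNb hNbb)))) as [s [[h|h] [k1 k2]]];
      apply h; intros A _ hA; eauto.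
Qed.

(* Along [r], [T_s z] eventually lies in the closure of every neighbourhood
   [V] of [y]: syndeticity of the return times to [V] puts some translate
   [-u + {s : T_s y in V}] into [q]. *)
Lemma unif_recurrent_return y (q : filt S) z :
  unif_recurrent_near_zero t T y -> Oplus q -> Tp_is t T q y z ->
  exists r, Oplus r /\ Tp_is t T r z y.
Proof.
  intros hur hq hqz. destruct HT as [_ [hH [hcont hact]]].
  pose proof (Oplus_ultrafilter q hq) as hqu.
  destruct (Oplus_of_base (fun A => exists V, open t V /\ V y /\
              A = fun s => adherent V (T s z))) as [r [hr hrB]].
  - exists (fun s => adherent (fun _ => True) (T s z)), (fun _ => True).
    split; [apply open_full|]. auto.
  - intros ? ? [V1 [hV1 [hy1 ->]]] [V2 [hV2 [hy2 ->]]].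
    exists (fun s => adherent (fun w => V1 w /\ V2 w) (T s z)). split.
    + exists (fun w => V1 w /\ V2 w). split; [apply open_inter; auto|]. auto.
    + intros s hs. split; intros N hN hNs; destruct (hs N hN hNs) as [w [k [k1 k2]]]; eauto.
  - intros ? eps [V [hV [hVy ->]]] he.
    destruct (hur V hV hVy eps he) as [Fl [delta [_ [hFe [hd hcov]]]]].
    destruct (uf_exists_In q hqu Fl (fun u => shift u (fun s => V (T s y)))) as [u [hu hqu']].
    + apply (uf_mono q hqu _ _ (proj2 hq delta hd)). exact hcov.
    + exists u. split; auto. intros N hN hNu.
      destruct (uf_inhabited q hqu _ (uf_and q hqu _ _ hqu' (hqz _ (hcont u N hN) hNu)))
        as [s [k1 k2]].
      exists (T (ptadd u s) y). unfold shift in k1. split; auto. rewrite <- hact. exact k2.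
  - exists r. split; auto. pose proof (Oplus_ultrafilter r hr) as hru.
    destruct (plim_exists r (fun s => T s z) hru) as [w hw].
    replace y with w; auto. apply NNPP; intros hne.
    destruct (hH w y hne) as [U [V [hU [hV [hUw [hVy hd]]]]]].
    assert (hrV : r (fun s => adherent V (T s z))) by (apply hrB; exists V; auto).
    destruct (uf_inhabited r hru _ (uf_and r hru _ _ (hw U hU hUw) hrV)) as [s [k1 k2]].
    destruct (k2 U hU k1) as [w' [m1 m2]]. exact (hd w' m1 m2).
Qed.

Lemma idempotent_Tp_fix (u : filt S) x y :
  is_ultrafilter u -> idempotent u -> Tp_is t T u x y -> Tp_is t T u y y.
Proof.
  intros hu hid hux. destruct (plim_exists u (fun s => T s y) hu) as [y' hy'].
  pose proof (Tp_add u u x y y' hu hu hux hy') as h. unfold idempotent in hid.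
  rewrite hid in h. replace y with y' at 2; auto. apply (plim_unique u _ _ _ hu h hux).
Qed.

Lemma common_limit_proximal (u : filt S) x y z :
  Oplus u -> Tp_is t T u x z -> Tp_is t T u y z -> proximal_near_zero t T x y.
Proof.
  intros [hu hsmall] hux huy U hU hdiag eps he.
  destruct (hU (z, z) (hdiag z)) as [A [B [hA [hB [hAz [hBz hAB]]]]]].
  destruct (uf_inhabited u hu _ (uf_and u hu _ _ (hux A hA hAz)
              (uf_and u hu _ _ (huy B hB hBz) (hsmall eps he)))) as [s [k1 [k2 k3]]].
  exists s. split; auto.
Qed.

(* If the return times to [W] were not syndetic, some [q] in O^+(S) avoids
   all small translates of them; but [u = r + q + u] for some [r], so
   [T_r (T_q y) = y] and a small [s0] with [T_s0 (T_q y)] in [W] gives a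
   translate in [q]. *)
Lemma Tp_fix_unif_recurrent (u : filt S) y :
  dense_in_pos S -> in_min_left_ideal u -> Tp_is t T u y y ->
  unif_recurrent_near_zero t T y.
Proof.
  intros HS [hu hm] huy W hW hWy. destruct HT as [_ [_ [hcont hact]]].
  pose proof (Oplus_ultrafilter u hu) as huu.
  apply NNPP; intros hns.
  destruct (not_syndetic_Oplus _ HS hns) as [eps [q [he [hq hqB]]]].
  pose proof (Oplus_ultrafilter q hq) as hqu.
  destruct (hm q hq) as [r [hr e]]. pose proof (Oplus_ultrafilter r hr) as hru.
  destruct (plim_exists q (fun s => T s y) hqu) as [z hz].
  destruct (plim_exists r (fun s => T s z) hru) as [w hw].
  pose proof (Tp_add r (ufadd q u) y z w hru (ufadd_ultrafilter q u hqu huu)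
                (Tp_add q u y y z hqu huu huy hz) hw) as hrw.
  rewrite e in hrw. assert (w = y) as -> by exact (plim_unique u _ _ _ huu hrw huy).
  destruct (uf_inhabited r hru _ (uf_and r hru _ _ (hw W hW hWy) (proj2 hr eps he)))
    as [s0 [k1 k2]].
  apply (uf_not_compl q hqu _ (hz _ (hcont s0 W hW) k1)).
  apply (uf_mono q hqu _ _ (hqB s0 k2)). intros s hs. unfold shift in hs.
  rewrite hact. exact hs.
Qed.

Lemma min_left_point_of_proximal x y :
  dense_in_pos S -> unif_recurrent_near_zero t T y -> proximal_near_zero t T x y ->
  exists q, in_min_left_ideal q /\ Tp_is t T q x y /\ Tp_is t T q y y.
Proof.
  intros HS hur hprox.
  destruct (proximal_common_limit x y hprox) as [p [a [hp [hpx hpy]]]].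
  destruct (exists_in_min_left_ideal HS) as [v hv].
  pose proof (Oplus_ultrafilter p hp) as hpu.
  pose proof (Oplus_ultrafilter v (proj1 hv)) as hvu.
  destruct (plim_exists v (fun s => T s a) hvu) as [z hz].
  pose proof (in_min_left_ideal_addr p v hp hv) as hq0.
  pose proof (Oplus_ultrafilter _ (proj1 hq0)) as hq0u.
  destruct (unif_recurrent_return y (ufadd v p) z hur (proj1 hq0)
              (Tp_add v p y a z hvu hpu hpy hz)) as [r [hr hrz]].
  pose proof (Oplus_ultrafilter r hr) as hru.
  exists (ufadd r (ufadd v p)). split; [apply in_min_left_ideal_addl; auto|].
  split; apply (Tp_add r (ufadd v p) _ z y hru hq0u); auto; apply (Tp_add v p _ a z); auto.
Qed.

(* Ellis' theorem in the closed subsemigroup of [O^+(S) + q] of those [w]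
   with [T_w x = y = T_w y]. *)
Lemma min_left_idempotent_of_fiber (q : filt S) x y :
  in_min_left_ideal q -> Tp_is t T q x y -> Tp_is t T q y y ->
  exists u, in_min_left_ideal u /\ idempotent u /\ Tp_is t T u x y.
Proof.
  intros hq hqx hqy. pose proof (Oplus_ultrafilter q (proj1 hq)) as hqu.
  set (M := fun w => (exists a, Oplus a /\ w = ufadd a q) /\
              (is_ultrafilter w /\ Tp_is t T w x y) /\ (is_ultrafilter w /\ Tp_is t T w y y)).
  assert (hM : nonempty_closed M).
  { split; [|split].
    - destruct (proj2 hq q (proj1 hq)) as [r [hr e]]. exists q. split; [|split; split; auto].
      exists (ufadd r q). split; [apply Oplus_add; [exact hr|apply hq]|].
      rewrite <- ufaddA. symmetry; exact e.
    - intros c [_ [[h _] _]]; exact h.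
    - apply closedI; [apply closed_add_right; auto|apply closedI; apply closed_Tp_fiber].
      + apply Oplus_ultrafilter.
      + apply Oplus_closed. }
  assert (hMs : add_closed M).
  { intros w1 w2 [[a1 [ha1 e1]] [[u1 h1x] [_ h1y]]] [[a2 [ha2 e2]] [[u2 h2x] [_ h2y]]].
    split; [|split; split].
    - exists (ufadd w1 a2). split.
      + rewrite e1. apply Oplus_add; auto. apply Oplus_add; auto. apply hq.
      + rewrite e2. apply ufaddA.
    - apply ufadd_ultrafilter; auto.
    - apply (Tp_add w1 w2 x y y u1 u2 h2x h1y).
    - apply ufadd_ultrafilter; auto.
    - apply (Tp_add w1 w2 y y y u1 u2 h2y h1y). }
  destruct (ellis_idempotent M hM hMs) as [u [[[a [ha ->]] [[_ hux] _]] hid]].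
  exists (ufadd a q). split; [apply in_min_left_ideal_addl; auto|]. auto.
Qed.

End Dynamics.
End BetaS.

Theorem lemma2p10 (S : Subsemigroup) (HS : dense_in_pos S)
  (X : Type) (t : topology X) (T : pt S -> X -> X) (HT : dynsys t T)
  (x y : X) :
  (exists u : filt S, in_K_Oplus u /\ idempotent u /\ Tp_is t T u x y) <->
  (unif_recurrent_near_zero t T y /\ proximal_near_zero t T x y).
Proof.
  split.
  - intros [u [hK [hid hux]]]. apply (in_K_Oplus_iff S u HS) in hK.
    assert (huy : Tp_is t T u y y).
    { eapply idempotent_Tp_fix; eauto. apply Oplus_ultrafilter, hK. }
    split.
    + eapply Tp_fix_unif_recurrent; eauto.
    + eapply common_limit_proximal; [apply hK|exact hux|exact huy].
  - intros [hur hprox].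
    destruct (min_left_point_of_proximal S X t T HT x y HS hur hprox) as [q [hq [hqx hqy]]].
    destruct (min_left_idempotent_of_fiber S X t T HT q x y hq hqx hqy) as [u [hu [hid hux]]].
    exists u. split; [apply in_K_Oplus_iff; auto|]. auto.
Qed.
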